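(* For integers $n\ge 1$ let $\mu=\mu(n)=\frac{\pi}{6}\sqrt{24n-1}$ and \[ T(n)=\frac{\sqrt{12}}{24n-1}\left[\left(1-\frac{1}{\mu}\right)e^{\mu}+\frac{(-1)^n}{\sqrt2}e^{\mu/2}\right]. \] Let $T_1(n)=2\log T(n)-\log T(n-1)-\log T(n+1)$ and $C=\pi\sqrt{2/3}$. Then for all integers $n\ge 50$, \[ \frac{24\pi}{(24(n+1)-1)^{3/2}}-\frac{3}{n^2} < T_1(n) < \frac{24\pi}{(24(n-1)-1)^{3/2}}+e^{-C\sqrt n/10}. \]
   Context: $\log$ denotes the natural logarithm. *)

From Stdlib Require Import Reals.
Open Scope R_scope.

Definition mu (n : nat) : R := PI / 6 * sqrt (24 * INR n - 1).

Definition T (n : nat) : R :=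
  sqrt 12 / (24 * INR n - 1) *
  ((1 - 1 / mu n) * exp (mu n) + (-1) ^ n / sqrt 2 * exp (mu n / 2)).

Definition T1 (n : nat) : R := 2 * ln (T n) - ln (T (n - 1)) - ln (T (n + 1)).

Definition Cconst : R := PI * sqrt (2 / 3).

(* Write T(k) = sqrt 12 / a_k * e^(mu k) * u(k) with a_k = 24 k - 1 and
   u(k) = 1 - 1 / mu k + (-1)^k e^(-mu k / 2) / sqrt 2.  Then T1(n) is the sum of the
   second differences at n of mu, of -log a and of -log u.  The first is pi/6 times the
   second difference of sqrt with step 24 at a = a_n, hence lies between
   24 pi / (a + 24)^(3/2) and 24 pi / (a - 24)^(3/2); the second is
   log (1 - 576 / a^2), between -1.01 / n^2 and -576 / a^2.  In the third, the smooth
   part 1 - 6 / (pi sqrt a) of u contributes at most 576 / a^2, which the second term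
   cancels, and the oscillating part is of order e^(-mu(n-1)/2), far below
   e^(-C sqrt n / 10).  For the lower bound every correction is O(1/n^2). *)

From Stdlib Require Import Reals Lra Psatz Machin.
Open Scope R_scope.

Lemma PI_gt_3_14 : 3.14 < PI.
Proof.
destruct (PI_2_3_7_ineq 1) as [H _].
unfold tg_alt, PI_2_3_7_tg, Ratan_seq in H; simpl in H; lra.
Qed.

Lemma exp_le x y : x <= y -> exp x <= exp y.
Proof.
intros [Hlt | ->]; [left; exact (exp_increasing _ _ Hlt) | right; reflexivity].
Qed.

Lemma exp_pow_INR x k : exp x ^ k = exp (INR k * x).
Proof.
induction k as [| k IH].
- now rewrite Rmult_0_l, exp_0.
- rewrite S_INR, <- tech_pow_Rmult, IH, <- exp_plus; f_equal; ring.
Qed.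

Lemma exp_ge_sum_f_R0 x N :
  0 <= x -> sum_f_R0 (fun i => / INR (Factorial.fact i) * x ^ i) N <= exp x.
Proof.
intros Hx; unfold exp; destruct (exist_exp x) as [l Hl]; simpl.
apply (sum_incr _ _ _ Hl); intros i.
apply Rmult_le_pos; [| now apply pow_le].
left; apply Rinv_0_lt_compat, lt_0_INR, Factorial.lt_O_fact.
Qed.

Lemma exp_8_5_ge : 4870 <= exp 8.5.
Proof.
assert (Hhalf := exp_ge_sum_f_R0 (1 / 2) 4 ltac:(lra)); simpl in Hhalf.
replace 8.5 with (INR 17 * (1 / 2)) by (simpl; lra).
rewrite <- exp_pow_INR.
apply Rle_trans with (1.6484 ^ 17); [simpl; nra | apply pow_incr; lra].
Qed.

(* Write [exp y = exp y0 * exp t ^ 4] with [t = (y - y0) / 4] and use [1 + t <= exp t]. *)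
Lemma exp_ge_scaled_pow4 y0 y :
  4 <= y0 <= y -> exp y0 * (y / y0) ^ 4 <= exp y.
Proof.
intros Hy.
set (t := (y - y0) / 4).
assert (Ey : exp y = exp y0 * exp t ^ 4).
{ rewrite exp_pow_INR, <- exp_plus; f_equal; unfold t; simpl; field. }
assert (Ht : y / y0 <= exp t).
{ apply Rle_trans with (1 + t); [| apply exp_ineq1_le].
  apply Rmult_le_reg_r with y0; [lra |].
  unfold t; field_simplify; nra. }
rewrite Ey; apply Rmult_le_compat_l; [left; apply exp_pos |].
apply pow_incr; split; [left; apply Rdiv_lt_0_compat |]; lra.
Qed.

Lemma ln_sub_ln_bounds X Y :
  0 < X -> 0 < Y -> (X - Y) / X <= ln X - ln Y <= (X - Y) / Y.
Proof.
intros HX HY.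
assert (H1 := exp_ineq1_le (ln X - ln Y)).
assert (H2 := exp_ineq1_le (ln Y - ln X)).
unfold Rminus in H1, H2; rewrite !exp_plus, !exp_Ropp, !exp_ln in H1, H2 by lra.
replace ((X - Y) / X) with (1 - Y * / X) by (field; lra).
replace ((X - Y) / Y) with (X * / Y - 1) by (field; lra).
lra.
Qed.

Lemma ln_shift_prod_bounds a h : 0 < h < a ->
  - (h ^ 2 / ((a - h) * (a + h))) <= ln ((a - h) * (a + h)) - ln (a ^ 2)
  <= - (h ^ 2 / a ^ 2).
Proof.
intros Hh.
assert (Hprod : 0 < (a - h) * (a + h)) by nra.
destruct (ln_sub_ln_bounds ((a - h) * (a + h)) (a ^ 2)) as [L1 L2]; [lra | nra |].
replace (- (h ^ 2 / ((a - h) * (a + h)))) with (((a - h) * (a + h) - a ^ 2) / ((a - h) * (a + h)))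
  by (field; lra).
replace (- (h ^ 2 / a ^ 2)) with (((a - h) * (a + h) - a ^ 2) / a ^ 2) by (field; lra).
lra.
Qed.

Lemma Rpower_3_2 z : 0 < z -> Rpower z (3 / 2) = z * sqrt z.
Proof.
intros Hz.
replace (3 / 2) with (1 + / 2) by field.
now rewrite Rpower_plus, Rpower_1, Rpower_sqrt.
Qed.

Lemma Rdiv_le_cross a b c d : 0 < b -> 0 < d -> a * d <= c * b -> a / b <= c / d.
Proof.
intros Hb Hd H.
apply Rmult_le_reg_r with (b * d); [nra |].
replace (a / b * (b * d)) with (a * d) by (field; lra).
replace (c / d * (b * d)) with (c * b) by (field; lra).
exact H.
Qed.

Lemma Rabs_le_inv a b : Rabs a <= b -> - b <= a <= b.
Proof. split_Rabs; lra. Qed.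

Section SqrtTriple.

Variables h p q r : R.
Hypotheses (Hh : 0 < h) (Hp : 0 < p) (Hq : 0 < q) (Hr : 0 < r).
Hypotheses (Hpq : q ^ 2 = p ^ 2 + h) (Hpr : r ^ 2 = p ^ 2 + 2 * h).

Lemma sqrt_triple_le : p <= q <= r.
Proof. split; nra. Qed.

Lemma sqrt_triple_diffs :
  q - p = h / (p + q) /\ r - q = h / (q + r) /\ r - p = 2 * h / (p + r).
Proof. repeat split; field_simplify_eq; nra. Qed.

Lemma sqrt_second_diff : 2 * q - p - r = 2 * h ^ 2 / ((p + q) * (q + r) * (p + r)).
Proof.
destruct sqrt_triple_diffs as (Eqp & Erq & Erp).
replace (2 * q - p - r) with ((q - p) - (r - q)) by ring.
rewrite Eqp, Erq.
replace (h / (p + q) - h / (q + r)) with (h * (r - p) / ((p + q) * (q + r))) by (field; lra).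
rewrite Erp; field; repeat split; lra.
Qed.

Lemma sqrt_second_diff_bounds :
  h ^ 2 / (4 * r ^ 3) <= 2 * q - p - r <= h ^ 2 / (4 * p ^ 3).
Proof.
destruct sqrt_triple_le as [Hpq' Hqr'].
assert (Hh2 : 0 < h ^ 2) by nra.
assert (Hlo : (2 * p) * (2 * p) * (2 * p) <= (p + q) * (q + r) * (p + r))
  by (repeat apply Rmult_le_compat; nra).
assert (Hhi : (p + q) * (q + r) * (p + r) <= (2 * r) * (2 * r) * (2 * r))
  by (repeat apply Rmult_le_compat; nra).
apply Rmult_le_compat_l with (r := h ^ 2) in Hlo, Hhi; try lra.
rewrite sqrt_second_diff.
assert (Hprod : 0 < (p + q) * (q + r) * (p + r)) by (repeat apply Rmult_lt_0_compat; lra).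
split; apply Rdiv_le_cross; simpl in *; try lra; repeat apply Rmult_lt_0_compat; lra.
Qed.

Lemma inv_second_diff_bounds : 0 <= 1 / p + 1 / r - 2 / q <= h ^ 2 / p ^ 5.
Proof.
destruct sqrt_triple_le as [Hpq' Hqr'].
destruct sqrt_triple_diffs as (Eqp & Erq & Erp).
assert (E : 1 / p + 1 / r - 2 / q
            = h * (q * (r - p) + 2 * h) / (p * q * r * (p + q) * (q + r))).
{ replace (1 / p + 1 / r - 2 / q) with ((q - p) / (p * q) - (r - q) / (q * r))
    by (field; lra).
  rewrite Eqp, Erq; field_simplify_eq; [rewrite Hpr; ring | repeat split; lra]. }
assert (Hqrp : 0 <= q * (r - p) <= 2 * h).
{ rewrite Erp; split; [apply Rmult_le_pos; [lra | left; apply Rdiv_lt_0_compat; lra] |].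
  apply Rmult_le_reg_r with (p + r); [lra |]; field_simplify; nra. }
assert (Hden : p * p * p * (2 * p) * (2 * p) <= p * q * r * (p + q) * (q + r))
  by (repeat apply Rmult_le_compat; nra).
assert (Hnum : h * (q * (r - p) + 2 * h) <= 4 * h ^ 2) by nra.
rewrite E; split.
- left; apply Rdiv_lt_0_compat; [nra | repeat apply Rmult_lt_0_compat; lra].
- assert (Hp5 : 0 < p ^ 5) by (apply pow_lt; lra).
  apply Rdiv_le_cross; [repeat apply Rmult_lt_0_compat; lra | exact Hp5 |].
  apply Rmult_le_compat_l with (r := h ^ 2) in Hden; [| nra].
  apply Rmult_le_compat_r with (r := p ^ 5) in Hnum; [| lra].
  simpl in *; lra.
Qed.

Lemma inv_sqr_sub_bounds : - (h ^ 2 / (2 * p ^ 6)) <= 1 / q ^ 2 - 1 / (p * r) <= 0.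
Proof.
destruct sqrt_triple_le as [Hpq' Hqr'].
assert (Hdiff : (q ^ 2) ^ 2 - (p * r) ^ 2 = h ^ 2).
{ replace ((p * r) ^ 2) with (p ^ 2 * r ^ 2) by ring; rewrite Hpq, Hpr; ring. }
assert (Hpr' : 0 < p * r <= q ^ 2) by (split; nra).
assert (E : 1 / q ^ 2 - 1 / (p * r) = - (h ^ 2 / ((q ^ 2 + p * r) * q ^ 2 * (p * r)))).
{ rewrite <- Hdiff; field; nra. }
assert (Hden : 2 * p ^ 6 <= (q ^ 2 + p * r) * q ^ 2 * (p * r)).
{ replace (2 * p ^ 6) with ((p ^ 2 + p ^ 2) * p ^ 2 * p ^ 2) by ring.
  repeat apply Rmult_le_compat; nra. }
assert (Hh2 : 0 < h ^ 2) by nra.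
assert (Hp6 : 0 < 2 * p ^ 6) by (assert (0 < p ^ 6) by (apply pow_lt; lra); lra).
rewrite E; split.
- apply Ropp_le_contravar, Rdiv_le_cross; [lra | lra |].
  apply Rmult_le_compat_l; lra.
- enough (0 < h ^ 2 / ((q ^ 2 + p * r) * q ^ 2 * (p * r))) by lra.
  apply Rdiv_lt_0_compat; lra.
Qed.

Lemma one_sub_div_sqr_sub_mul_bounds k : 0 <= k ->
  - (k ^ 2 * h ^ 2 / (2 * p ^ 6)) <= (1 - k / q) ^ 2 - (1 - k / p) * (1 - k / r)
  <= k * h ^ 2 / p ^ 5.
Proof.
intros Hk.
destruct inv_second_diff_bounds as [C1 C2].
destruct inv_sqr_sub_bounds as [S1 S2].
replace ((1 - k / q) ^ 2 - (1 - k / p) * (1 - k / r))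
  with (k * (1 / p + 1 / r - 2 / q) + k ^ 2 * (1 / q ^ 2 - 1 / (p * r))) by (field; lra).
assert (Hk2 : 0 <= k ^ 2) by nra.
split.
- replace (- (k ^ 2 * h ^ 2 / (2 * p ^ 6))) with (k ^ 2 * - (h ^ 2 / (2 * p ^ 6)))
    by (field; nra).
  assert (0 <= k * (1 / p + 1 / r - 2 / q)) by (apply Rmult_le_pos; lra).
  assert (k ^ 2 * - (h ^ 2 / (2 * p ^ 6)) <= k ^ 2 * (1 / q ^ 2 - 1 / (p * r)))
    by (apply Rmult_le_compat_l; lra).
  lra.
- replace (k * h ^ 2 / p ^ 5) with (k * (h ^ 2 / p ^ 5)) by (field; nra).
  assert (k * (1 / p + 1 / r - 2 / q) <= k * (h ^ 2 / p ^ 5))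
    by (apply Rmult_le_compat_l; lra).
  assert (k ^ 2 * (1 / q ^ 2 - 1 / (p * r)) <= 0) by nra.
  lra.
Qed.

End SqrtTriple.

Lemma sqr_sub_mul_perturb v0 vm vp e0 em ep D :
  0 <= v0 <= 1 -> 0 <= vm <= 1 -> 0 <= vp <= 1 ->
  Rabs e0 <= D -> Rabs em <= D -> Rabs ep <= D ->
  Rabs ((v0 + e0) ^ 2 - (vm + em) * (vp + ep) - (v0 ^ 2 - vm * vp)) <= 4 * D + 2 * D ^ 2.
Proof.
intros H0 Hm Hp He0 Hem Hep.
apply Rabs_le_inv in He0, Hem, Hep.
apply Rabs_le; split; nra.
Qed.

Lemma one_sub_div_bounds c k s : 0 < s -> 0 <= k <= c * s -> 1 - c <= 1 - k / s <= 1.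
Proof.
intros Hs Hk.
assert (0 <= k / s <= c); [split | lra].
- apply Rmult_le_pos; [lra | left; now apply Rinv_0_lt_compat].
- apply Rmult_le_reg_r with s; [lra |]; field_simplify; lra.
Qed.

(* Here [x = n], [p, q, r = sqrt (a - 24), sqrt a, sqrt (a + 24)] with [a = 24 x - 1],
   [k = 6 / PI], and [em, e0, ep] are the oscillating terms of [u], of size at most [D];
   [um, u0, up] are then the values of [u] at [n - 1, n, n + 1]. *)
Section Correction.

Variables x k D p q r em e0 ep : R.
Hypotheses (Hx : 50 <= x) (Hk : 0 <= k <= 1.911).
Hypotheses (Hp : 0 < p) (Hq : 0 < q) (Hr : 0 < r).
Hypotheses (Hp2 : p ^ 2 = 24 * x - 25) (Hq2 : q ^ 2 = p ^ 2 + 24) (Hr2 : r ^ 2 = p ^ 2 + 2 * 24).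
Hypotheses (HD : D * x ^ 2 <= 0.3)
  (Hem : Rabs em <= D) (He0 : Rabs e0 <= D) (Hep : Rabs ep <= D).

Let um := 1 - k / p + em.
Let u0 := 1 - k / q + e0.
Let up := 1 - k / r + ep.

Lemma corr_p_ge : 34.27 <= p.
Proof. nra. Qed.

Lemma corr_D_bounds : 0 <= D <= 0.00012.
Proof.
assert (HD0 : 0 <= D) by (apply Rle_trans with (Rabs e0); [apply Rabs_pos | exact He0]).
assert (D * 2500 <= D * x ^ 2) by (apply Rmult_le_compat_l; nra).
lra.
Qed.

Lemma corr_one_sub_div_bounds :
  0.944 <= 1 - k / p <= 1 /\ 0.944 <= 1 - k / q <= 1 /\ 0.944 <= 1 - k / r <= 1.
Proof.
assert (Hpp := corr_p_ge).
destruct (sqrt_triple_le 24 p q r) as [Hpq Hqr]; try lra.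
replace 0.944 with (1 - 0.056) by lra.
repeat split; apply (one_sub_div_bounds 0.056); lra.
Qed.

Lemma corr_factors_ge : 0.94 <= um /\ 0.94 <= u0 /\ 0.94 <= up.
Proof.
destruct corr_one_sub_div_bounds as (Vm & V0 & Vp).
destruct corr_D_bounds as [HD0 HD1].
unfold um, u0, up; split_Rabs; lra.
Qed.

Lemma corr_second_order_le : k ^ 2 * 24 ^ 2 / (2 * p ^ 6) <= 0.01 / x ^ 2.
Proof.
assert (Hp6 : (23.5 * x) ^ 3 <= p ^ 6).
{ replace (p ^ 6) with ((p ^ 2) ^ 3) by ring.
  apply pow_incr; lra. }
assert (Hk2 : k ^ 2 <= 3.66) by nra.
assert (0 < p ^ 6) by (apply pow_lt; lra).
apply Rdiv_le_cross; [lra | nra |].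
assert (k ^ 2 * 24 ^ 2 * x ^ 2 <= 3.66 * 24 ^ 2 * x ^ 2)
  by (apply Rmult_le_compat_r; nra).
assert (50 * x ^ 2 <= x * x ^ 2) by (apply Rmult_le_compat_r; nra).
replace ((23.5 * x) ^ 3) with (23.5 ^ 3 * (x * x ^ 2)) in Hp6 by ring.
lra.
Qed.

(* The leading part of the correction is cancelled by [ln (1 - 24 ^ 2 / q ^ 4)]. *)
Lemma corr_leading_le : k * 24 ^ 2 / p ^ 5 <= 0.88 * (24 ^ 2 / q ^ 4).
Proof.
assert (Hpp := corr_p_ge).
assert (Hq4 : q ^ 4 <= (1.021 * p ^ 2) ^ 2).
{ replace (q ^ 4) with ((q ^ 2) ^ 2) by ring.
  apply pow_incr; nra. }
assert (0 < q ^ 4) by (apply pow_lt; lra).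
assert (0 < p ^ 5) by (apply pow_lt; lra).
rewrite Rmult_div_assoc.
apply Rdiv_le_cross; [lra | lra |].
assert (k * q ^ 4 <= 1.911 * (1.021 * p ^ 2) ^ 2) by (apply Rmult_le_compat; nra).
assert (34.27 * p ^ 4 <= p * p ^ 4) by (apply Rmult_le_compat_r; nra).
replace (p ^ 5) with (p * p ^ 4) by ring.
nra.
Qed.

Lemma corr_sqr_sub_mul_bounds :
  - (1.22 / x ^ 2) <= u0 ^ 2 - um * up <= k * 24 ^ 2 / p ^ 5 + 4.01 * D.
Proof.
destruct corr_one_sub_div_bounds as (Vm & V0 & Vp).
destruct corr_D_bounds as [HD0 HD1].
assert (Hpp := corr_p_ge).
destruct (one_sub_div_sqr_sub_mul_bounds 24 p q r) with (k := k) as [V1 V2]; try lra.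
assert (Hpert := sqr_sub_mul_perturb (1 - k / q) (1 - k / p) (1 - k / r) e0 em ep D
                   ltac:(lra) ltac:(lra) ltac:(lra) He0 Hem Hep).
apply Rabs_le_inv in Hpert.
assert (Hx2 : 2500 <= x ^ 2) by nra.
assert (HDD : 4 * D + 2 * D ^ 2 <= 4.01 * D) by nra.
split.
- assert (Hv := corr_second_order_le).
  assert (HDx : 4.01 * D <= 1.21 / x ^ 2).
  { apply Rmult_le_reg_r with (x ^ 2); [lra |].
    replace (1.21 / x ^ 2 * x ^ 2) with 1.21 by (field; nra). nra. }
  unfold um, u0, up, Rdiv in *; lra.
- unfold um, u0, up; lra.
Qed.

Lemma ln_corr_bounds :
  - (1.6 / x ^ 2) <= ln (u0 ^ 2) - ln (um * up) <= 24 ^ 2 / q ^ 4 + 4.6 * D.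
Proof.
destruct corr_factors_ge as (Um & U0 & Up).
destruct corr_sqr_sub_mul_bounds as [W1 W2].
destruct corr_D_bounds as [HD0 HD1].
assert (Hpp := corr_p_ge).
assert (HU0 : 0.88 <= u0 ^ 2) by nra.
assert (HU : 0.88 <= um * up) by nra.
destruct (ln_sub_ln_bounds (u0 ^ 2) (um * up)) as [L1 L2]; [lra | lra |].
assert (Hx2 : 0 < x ^ 2) by nra.
split.
- apply Rle_trans with (2 := L1).
  rewrite Ropp_div_distr_l.
  apply Rdiv_le_cross; [lra | lra |].
  assert (E : 1.22 / x ^ 2 * x ^ 2 = 1.22) by (field; lra).
  assert (0 <= (u0 ^ 2 - um * up + 1.22 / x ^ 2) * x ^ 2) by (apply Rmult_le_pos; lra).
  nra.
- apply Rle_trans with (1 := L2).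
  set (M := k * 24 ^ 2 / p ^ 5 + 4.01 * D) in W2.
  assert (Hp5 : 0 < p ^ 5) by (apply pow_lt; lra).
  assert (HM0 : 0 <= M).
  { unfold M; assert (0 <= k * 24 ^ 2 / p ^ 5); [| lra].
    apply Rmult_le_pos; [nra | left; apply Rinv_0_lt_compat; lra]. }
  apply Rle_trans with (M / 0.88).
  { apply Rle_trans with (M / (um * up)).
    - apply Rmult_le_compat_r; [left; apply Rinv_0_lt_compat |]; lra.
    - apply Rmult_le_compat_l; [| apply Rinv_le_contravar]; lra. }
  assert (Hkq := corr_leading_le).
  unfold M in *; lra.
Qed.

End Correction.

Definition T_osc (k : nat) : R := (-1) ^ k / sqrt 2 * exp (- (mu k / 2)).

Definition T_corr (k : nat) : R := 1 - 1 / mu k + T_osc k.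

Lemma T_eq k : T k = sqrt 12 / (24 * INR k - 1) * (exp (mu k) * T_corr k).
Proof.
unfold T, T_corr, T_osc.
replace (exp (mu k / 2)) with (exp (mu k) * exp (- (mu k / 2)))
  by (rewrite <- exp_plus; f_equal; field).
ring.
Qed.

Lemma ln_T k : 0 < 24 * INR k - 1 -> 0 < T_corr k ->
  ln (T k) = ln (sqrt 12) - ln (24 * INR k - 1) + mu k + ln (T_corr k).
Proof.
intros Ha Hc.
assert (Hs : 0 < sqrt 12) by (apply sqrt_lt_R0; lra).
assert (He := exp_pos (mu k)).
rewrite T_eq, ln_mult, ln_mult, ln_exp; try lra.
- unfold Rdiv; rewrite ln_mult, ln_Rinv; try lra.
  now apply Rinv_0_lt_compat.
- apply Rdiv_lt_0_compat; lra.
- now apply Rmult_lt_0_compat.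
Qed.

Lemma INR_pred_24 n : (1 <= n)%nat -> 24 * INR (n - 1) - 1 = 24 * INR n - 25.
Proof. intros Hn; rewrite minus_INR, INR_1 by exact Hn; ring. Qed.

Lemma INR_succ_24 n : 24 * INR (n + 1) - 1 = 24 * INR n + 23.
Proof. rewrite plus_INR, INR_1; ring. Qed.

Lemma T1_eq n : (2 <= n)%nat ->
  0 < T_corr (n - 1) -> 0 < T_corr n -> 0 < T_corr (n + 1) ->
  T1 n = (2 * mu n - mu (n - 1) - mu (n + 1))
         + (ln ((24 * INR n - 25) * (24 * INR n + 23)) - ln ((24 * INR n - 1) ^ 2))
         + (ln (T_corr n ^ 2) - ln (T_corr (n - 1) * T_corr (n + 1))).
Proof.
intros Hn Hm H0 Hp.
assert (Hx : 2 <= INR n) by (apply le_INR in Hn; simpl in Hn; lra).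
assert (Hpred := INR_pred_24 n ltac:(lia)).
assert (Hsucc := INR_succ_24 n).
unfold T1; rewrite (ln_T (n - 1)), (ln_T n), (ln_T (n + 1)), Hpred, Hsucc; try lra.
rewrite !ln_mult, !ln_pow; try lra.
simpl (INR 2); ring.
Qed.

Lemma mu_pred n : (1 <= n)%nat -> mu (n - 1) = PI / 6 * sqrt (24 * INR n - 25).
Proof. intros Hn; unfold mu; now rewrite INR_pred_24. Qed.

Lemma mu_succ n : mu (n + 1) = PI / 6 * sqrt (24 * INR n + 23).
Proof. unfold mu; now rewrite INR_succ_24. Qed.

Lemma mu_ge_0 k : 0 <= mu k.
Proof.
assert (Hpi := PI_gt_3_14).
unfold mu; apply Rmult_le_pos; [lra | apply sqrt_pos].
Qed.

Lemma mu_le i j : (i <= j)%nat -> mu i <= mu j.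
Proof.
intros Hij; unfold mu.
assert (Hpi := PI_gt_3_14).
apply Rmult_le_compat_l; [lra |].
apply sqrt_le_1_alt; apply le_INR in Hij; lra.
Qed.

Lemma mu_second_diff_bounds n : (2 <= n)%nat ->
  24 * PI / Rpower (24 * (INR n + 1) - 1) (3 / 2)
  <= 2 * mu n - mu (n - 1) - mu (n + 1)
  <= 24 * PI / Rpower (24 * (INR n - 1) - 1) (3 / 2).
Proof.
intros Hn.
assert (Hx : 2 <= INR n) by (apply le_INR in Hn; simpl in Hn; lra).
assert (Hpi := PI_gt_3_14).
rewrite mu_pred, mu_succ by lia; unfold mu.
set (x := INR n) in *.
set (p := sqrt (24 * x - 25)); set (q := sqrt (24 * x - 1)); set (r := sqrt (24 * x + 23)).
assert (Hp : 0 < p) by (apply sqrt_lt_R0; lra).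
assert (Hq : 0 < q) by (apply sqrt_lt_R0; lra).
assert (Hr : 0 < r) by (apply sqrt_lt_R0; lra).
assert (Hp2 : p ^ 2 = 24 * x - 25) by (apply pow2_sqrt; lra).
assert (Hq2 : q ^ 2 = 24 * x - 1) by (apply pow2_sqrt; lra).
assert (Hr2 : r ^ 2 = 24 * x + 23) by (apply pow2_sqrt; lra).
destruct (sqrt_second_diff_bounds 24 p q r) as [S1 S2]; try lra.
replace (24 * (x + 1) - 1) with (24 * x + 23) by ring.
replace (24 * (x - 1) - 1) with (24 * x - 25) by ring.
rewrite !Rpower_3_2 by lra; fold p r.
replace (24 * x + 23) with (r ^ 2) by lra.
replace (24 * x - 25) with (p ^ 2) by lra.
replace (2 * (PI / 6 * q) - PI / 6 * p - PI / 6 * r) with (PI / 6 * (2 * q - p - r)) by ring.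
assert (H6 : 0 <= PI / 6) by lra.
split.
- replace (24 * PI / (r ^ 2 * r)) with (PI / 6 * (24 ^ 2 / (4 * r ^ 3))) by (field; lra).
  now apply Rmult_le_compat_l.
- replace (24 * PI / (p ^ 2 * p)) with (PI / 6 * (24 ^ 2 / (4 * p ^ 3))) by (field; lra).
  now apply Rmult_le_compat_l.
Qed.

Lemma ln_scale_bounds n : (50 <= n)%nat ->
  - (1.01 / INR n ^ 2)
  <= ln ((24 * INR n - 25) * (24 * INR n + 23)) - ln ((24 * INR n - 1) ^ 2)
  <= - (24 ^ 2 / (24 * INR n - 1) ^ 2).
Proof.
intros Hn.
assert (Hx : 50 <= INR n) by (apply le_INR in Hn; simpl in Hn; lra).
set (x := INR n) in *.
destruct (ln_shift_prod_bounds (24 * x - 1) 24) as [L1 L2]; [lra |].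
replace (24 * x - 1 - 24) with (24 * x - 25) in L1, L2 by ring.
replace (24 * x - 1 + 24) with (24 * x + 23) in L1, L2 by ring.
split; [| exact L2].
apply Rle_trans with (2 := L1), Ropp_le_contravar, Rdiv_le_cross; [nra | nra |].
nra.
Qed.

Lemma T_corr_eq j : (1 <= j)%nat ->
  T_corr j = 1 - (6 / PI) / sqrt (24 * INR j - 1) + T_osc j.
Proof.
intros Hj.
assert (Hx : 1 <= INR j) by (apply le_INR in Hj; simpl in Hj; lra).
assert (Hs : 0 < sqrt (24 * INR j - 1)) by (apply sqrt_lt_R0; lra).
assert (Hpi := PI_gt_3_14).
unfold T_corr, mu; field; lra.
Qed.

Lemma Rabs_T_osc_le i j : (i <= j)%nat -> Rabs (T_osc j) <= 0.71 * exp (- (mu i / 2)).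
Proof.
intros Hij.
assert (Hs : 1.41 <= sqrt 2).
{ rewrite <- (sqrt_pow2 1.41) by lra; apply sqrt_le_1_alt; lra. }
assert (Hinv : / sqrt 2 <= 0.71).
{ apply Rmult_le_reg_r with (sqrt 2); [lra |]; rewrite Rinv_l by lra; lra. }
assert (He : exp (- (mu j / 2)) <= exp (- (mu i / 2))).
{ apply exp_le; assert (Hm := mu_le i j Hij); lra. }
unfold T_osc, Rdiv.
rewrite !Rabs_mult, pow_1_abs, Rabs_inv, (Rabs_pos_eq (sqrt 2)), (Rabs_pos_eq (exp _));
  [| left; apply exp_pos | lra].
assert (0 < exp (- (mu j * / 2))) by apply exp_pos.
assert (0 < / sqrt 2) by (apply Rinv_0_lt_compat; lra).
nra.
Qed.

Lemma half_mu_pred_sqr_ge n : (50 <= n)%nat -> 1.6 * INR n <= (mu (n - 1) / 2) ^ 2.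
Proof.
intros Hn.
assert (Hx : 50 <= INR n) by (apply le_INR in Hn; simpl in Hn; lra).
assert (Hpi := PI_gt_3_14).
rewrite mu_pred by lia.
replace ((PI / 6 * sqrt (24 * INR n - 25) / 2) ^ 2)
  with (PI ^ 2 / 144 * sqrt (24 * INR n - 25) ^ 2) by field.
rewrite pow2_sqrt by lra.
assert (3.14 ^ 2 <= PI ^ 2) by (apply pow_incr; lra).
nra.
Qed.

Lemma exp_neg_half_mu_pred_sqr_le n : (50 <= n)%nat ->
  0.71 * exp (- (mu (n - 1) / 2)) * INR n ^ 2 <= 0.3.
Proof.
intros Hn.
assert (Hx : 50 <= INR n) by (apply le_INR in Hn; simpl in Hn; lra).
assert (Hy2 := half_mu_pred_sqr_ge n Hn).
set (y := mu (n - 1) / 2) in *.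
assert (Hy : 8.5 <= y) by (assert (Hm := mu_ge_0 (n - 1)); unfold y in *; nra).
assert (Hexp : exp 8.5 * (y / 8.5) ^ 4 <= exp y) by (apply exp_ge_scaled_pow4; lra).
assert (H85 := exp_8_5_ge).
assert (Hy4 : (1.6 * INR n) ^ 2 <= y ^ 4).
{ replace (y ^ 4) with ((y ^ 2) ^ 2) by ring.
  apply pow_incr; lra. }
assert (Hgrowth : 0.93 * (1.6 * INR n) ^ 2 <= exp y).
{ replace ((y / 8.5) ^ 4) with (y ^ 4 / 8.5 ^ 4) in Hexp by (field; lra).
  assert (0 <= y ^ 4 / 8.5 ^ 4) by (apply Rmult_le_pos; [apply pow_le |]; lra).
  assert (4870 * (y ^ 4 / 8.5 ^ 4) <= exp y) by nra.
  unfold Rdiv in *; lra. }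
assert (Hey : exp (- y) * exp y = 1) by (rewrite <- exp_plus, Rplus_opp_l; apply exp_0).
assert (Hpos : 0 < exp (- y)) by apply exp_pos.
apply Rmult_le_compat_l with (r := exp (- y)) in Hgrowth; [| lra].
nra.
Qed.

Lemma exp_neg_half_mu_pred_lt n : (50 <= n)%nat ->
  4.6 * (0.71 * exp (- (mu (n - 1) / 2))) < exp (- (Cconst * sqrt (INR n) / 10)).
Proof.
intros Hn.
assert (Hx : 50 <= INR n) by (apply le_INR in Hn; simpl in Hn; lra).
assert (Hpi := PI_gt_3_14).
rewrite mu_pred by lia; unfold Cconst.
set (x := INR n) in *.
set (s := sqrt x); set (p := sqrt (24 * x - 25)); set (t := sqrt (2 / 3)).
assert (Hs : s ^ 2 = x) by (apply pow2_sqrt; lra).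
assert (Hp : p ^ 2 = 24 * x - 25) by (apply pow2_sqrt; lra).
assert (Ht : t ^ 2 = 2 / 3) by (apply pow2_sqrt; lra).
assert (Hs0 : 0 <= s) by apply sqrt_pos.
assert (Hp0 : 0 <= p) by apply sqrt_pos.
assert (Ht0 : 0 <= t) by apply sqrt_pos.
assert (Hs7 : 7 <= s) by nra.
assert (Hps : 4.8 * s <= p) by nra.
assert (Ht1 : t <= 0.82) by nra.
set (y := PI / 6 * p / 2); set (c := PI * t * s / 10).
assert (Hyc : 3 <= y - c).
{ replace (y - c) with (PI * (p / 12 - t * s / 10)) by (unfold y, c; field).
  assert (0.3 * s <= p / 12 - t * s / 10) by nra.
  nra. }
assert (Hexp : 1 + (y - c) <= exp (y - c)) by apply exp_ineq1_le.
replace (exp (- c)) with (exp (- y) * exp (y - c)) by (rewrite <- exp_plus; f_equal; ring).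
assert (0 < exp (- y)) by apply exp_pos.
nra.
Qed.

Lemma T_corr_bounds n : (50 <= n)%nat ->
  (0 < T_corr (n - 1) /\ 0 < T_corr n /\ 0 < T_corr (n + 1)) /\
  - (1.6 / INR n ^ 2) <= ln (T_corr n ^ 2) - ln (T_corr (n - 1) * T_corr (n + 1))
  <= 24 ^ 2 / (24 * INR n - 1) ^ 2 + 4.6 * (0.71 * exp (- (mu (n - 1) / 2))).
Proof.
intros Hn.
assert (Hx : 50 <= INR n) by (apply le_INR in Hn; simpl in Hn; lra).
assert (Hpi := PI_gt_3_14).
assert (HD := exp_neg_half_mu_pred_sqr_le n Hn).
assert (Hem := Rabs_T_osc_le (n - 1) (n - 1) (le_n _)).
assert (He0 := Rabs_T_osc_le (n - 1) n ltac:(lia)).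
assert (Hep := Rabs_T_osc_le (n - 1) (n + 1) ltac:(lia)).
set (D := 0.71 * exp (- (mu (n - 1) / 2))) in *.
rewrite !T_corr_eq, INR_pred_24, INR_succ_24 by lia.
set (x := INR n) in *.
set (p := sqrt (24 * x - 25)); set (q := sqrt (24 * x - 1)); set (r := sqrt (24 * x + 23)).
assert (Hp : 0 < p) by (apply sqrt_lt_R0; lra).
assert (Hq : 0 < q) by (apply sqrt_lt_R0; lra).
assert (Hr : 0 < r) by (apply sqrt_lt_R0; lra).
assert (Hp2 : p ^ 2 = 24 * x - 25) by (apply pow2_sqrt; lra).
assert (Hq2 : q ^ 2 = p ^ 2 + 24) by (unfold q; rewrite pow2_sqrt; lra).
assert (Hr2 : r ^ 2 = p ^ 2 + 2 * 24) by (unfold r; rewrite pow2_sqrt; lra).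
assert (Hq4 : (24 * x - 1) ^ 2 = q ^ 4)
  by (replace (q ^ 4) with ((q ^ 2) ^ 2) by ring; rewrite Hq2, Hp2; ring).
assert (Hk : 0 <= 6 / PI <= 1.911).
{ split; [left; apply Rdiv_lt_0_compat; lra |].
  apply Rmult_le_reg_r with PI; [lra |]; field_simplify; lra. }
destruct (corr_factors_ge x (6 / PI) D p q r (T_osc (n - 1)) (T_osc n) (T_osc (n + 1)))
  as (Um & U0 & Up); try lra.
rewrite Hq4; split; [repeat split; lra |].
now apply ln_corr_bounds.
Qed.

Theorem lemma2p2 : forall n : nat, (50 <= n)%nat ->
  24 * PI / Rpower (24 * (INR n + 1) - 1) (3 / 2) - 3 / INR n ^ 2 < T1 n /\
  T1 n < 24 * PI / Rpower (24 * (INR n - 1) - 1) (3 / 2)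
         + exp (- (Cconst * sqrt (INR n) / 10)).
Proof.
intros n Hn.
destruct (T_corr_bounds n Hn) as ((Hm & H0 & Hp) & C1 & C2).
destruct (mu_second_diff_bounds n ltac:(lia)) as [M1 M2].
destruct (ln_scale_bounds n Hn) as [L1 L2].
assert (Hexp := exp_neg_half_mu_pred_lt n Hn).
assert (Hx : 0 < / INR n ^ 2).
{ apply Rinv_0_lt_compat, pow_lt, lt_0_INR; lia. }
rewrite T1_eq by (lia || assumption).
unfold Rdiv in *; split; lra.
Qed.
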